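(* Let $n\ge2$ and $Q\in SU_n$ with eigenvalues $\mu_1,\dots,\mu_n$ (with multiplicity) ordered so that $\arg(\mu_1)\le\cdots\le\arg(\mu_n)$, and assume $\zeta(Q):=\frac1{2\pi}\sum_{j=1}^n\arg(\mu_j)\ge0$. Let $m(Q):=\min\{\|X\|_\phi^2:X\in\mathfrak{su}_n,\ \exp(X)=Q\}$ and $\Theta(Q):=\{X\in\mathfrak{su}_n:\exp(X)=Q,\ \|X\|_\phi^2=m(Q)\}$. Let $X_0\in\mathfrak{su}_n$ with $\exp(X_0)=Q$ whose $n$ eigenvalues are $(\arg(\mu_1)+2h_1\pi)\mathbf{i},\dots,(\arg(\mu_n)+2h_n\pi)\mathbf{i}$, where $h_1,\dots,h_n\in\mathbb{Z}$ and $\sum_{j=1}^nh_j=-\zeta(Q)$. (a) If $\zeta(Q)=0$, then $m(Q)=\sum_{j=1}^n(\arg(\mu_j))^2$, and $X_0\in\Theta(Q)$ if and only if $h_j=0$ for all $j\in\{1,\dots,n\}$. (b) If $\zeta(Q)\ge1$, then $m(Q)=\sum_{j=1}^{n-\zeta(Q)}(\arg(\mu_j))^2+\sum_{j=n-\zeta(Q)+1}^n(2\pi-\arg(\mu_j))^2$. Moreover, if $\mu_{n-\zeta(Q)}\ne\mu_{n-\zeta(Q)+1}$, then $X_0\in\Theta(Q)$ if and only if $h_j=0$ for all $j\in\{1,\dots,n-\zeta(Q)\}$ and $h_l=-1$ for all $l\in\{n-\zeta(Q)+1,\dots,n\}$; while if $\mu_{n-\zeta(Q)}=\mu_{n-\zeta(Q)+1}$,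 then $X_0\in\Theta(Q)$ if and only if $h_r=0$ for every $r\in\{1,\dots,n-\zeta(Q)-1\}$ with $\mu_r\ne\mu_{n-\zeta(Q)}$, $h_t=-1$ for every $t\in\{n-\zeta(Q)+2,\dots,n\}$ with $\mu_t\ne\mu_{n-\zeta(Q)}$, and $h_m\in\{0,-1\}$ for every index $m$ with $\mu_m=\mu_{n-\zeta(Q)}$ (subject to the constraint $\sum_{j=1}^nh_j=-\zeta(Q)$).
   Context: $SU_n$ is the special unitary group, $\mathfrak{su}_n$ its Lie algebra of traceless skew-Hermitian matrices, $\exp$ the matrix exponential, $\|X\|_\phi=\sqrt{\mathrm{tr}(XX^* )}$ the Frobenius norm, and $\arg(z)\in(-\pi,\pi]$ the principal argument. Note $\zeta(Q)$ is an integer. *)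

From HB Require Import structures.
From mathcomp Require Import all_boot all_order all_algebra.
From mathcomp Require Import all_classical all_reals.
From mathcomp Require Import topology normedtype sequences trigo.
From mathcomp Require Import complex.
Set Implicit Arguments. Unset Strict Implicit. Unset Printing Implicit Defensive.
Import Order.TTheory GRing.Theory Num.Theory numFieldNormedType.Exports.
Local Open Scope ring_scope.
Local Open Scope classical_set_scope.

Section Defs.
Variable R : realType.
Local Notation C := (R[i]).

Definition conjz (z : C) : C := Complex (complex.Re z) (- complex.Im z).

Definition cadj n (X : 'M[C]_n) : 'M[C]_n := (map_mx conjz X)^T.

Definition modz (z : C) : R := Num.sqrt (complex.Re z ^+ 2 + complex.Im z ^+ 2).

(* principal argument, with values in (-pi, pi]  (arg 0 is irrelevant here) *)
Definition argz (z : C) : R :=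
  if 0 <= complex.Im z then acos (complex.Re z / modz z) else - acos (complex.Re z / modz z).

Definition exp_psum n (X : 'M[C]_n) (N : nat) : 'M[C]_n :=
  \sum_(k < N) ((k`!)%:R)^-1 *: X ^+ k.

Definition mexp n (X : 'M[C]_n) : 'M[C]_n :=
  \matrix_(i, j) Complex (limn (fun N => complex.Re (exp_psum X N i j)))
                         (limn (fun N => complex.Im (exp_psum X N i j))).

Definition SU n (Q : 'M[C]_n) : Prop := Q *m cadj Q = 1%:M /\ \det Q = 1.

Definition su n (X : 'M[C]_n) : Prop := cadj X = - X /\ \tr X = 0.

Definition frob2 n (X : 'M[C]_n) : R := complex.Re (\tr (X *m cadj X)).

(* m(Q) = min { ||X||^2 : X in su_n, exp X = Q } (taken as the infimum) *)
Definition mQ n (Q : 'M[C]_n) : R :=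
  inf [set frob2 X | X in [set X : 'M[C]_n | su X /\ mexp X = Q]].

Definition Theta n (Q : 'M[C]_n) : set 'M[C]_n :=
  [set X | su X /\ mexp X = Q /\ frob2 X = mQ Q].

(* zeta(Q) computed from a (1-based) listing mu_1..mu_n of the eigenvalues *)
Definition zeta n (mu : nat -> C) : R :=
  (2 * pi)^-1 * \sum_(1 <= j < n.+1) argz (mu j).

End Defs.

From Pilot Require Import Defs.
From HB Require Import structures.
From mathcomp Require Import all_boot all_order all_algebra.
From mathcomp Require Import all_classical all_reals.
From mathcomp Require Import topology normedtype sequences trigo.
From mathcomp Require Import complex.
From mathcomp Require Import spectral perm.
From mathcomp Require Import ring lra zify.
Set Implicit Arguments. Unset Strict Implicit. Unset Printing Implicit Defensive.
Import Order.TTheory GRing.Theory Num.Theory numFieldNormedType.Exports.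
Local Open Scope ring_scope.
Local Open Scope classical_set_scope.

(* Every X in su_n is unitarily diagonalisable with eigenvalues i lam_c, lam real
   with sum 0; then exp X has eigenvalues e^(i lam_c) and ||X||^2 = sum lam_c^2.
   If exp X = Q, matching eigenvalues gives lam = theta_j + 2 pi g_j with
   theta_j = arg mu_j and integers g_j, and the zero trace forces
   sum g_j = - zeta(Q) = - k.  Hence m(Q) is the minimum of
   sum_j (theta_j + 2 pi g_j)^2 over such g.  With a = theta_(n-k) this sum is
   the claimed value plus 4 pi sum_j D_j, where the excess D_j depends on g_j
   only, is nonnegative because theta is sorted in (-pi, pi], and vanishes iff g_j = 0
   for j <= n-k and g_j = -1 for j > n-k, the other value of {0, -1} being
   allowed exactly when theta_j = a.  The shift g = (0,..,0,-1,..,-1) attains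
   the bound, and X0 is in Theta(Q) iff every D_j(h) vanishes. *)

Lemma big_nat1_ord (T : Type) (idx : T) (op : T -> T -> T) n (F : nat -> T) :
  \big[op/idx]_(1 <= j < n.+1) F j = \big[op/idx]_(i < n) F i.+1.
Proof. by rewrite big_add1 big_mkord. Qed.

Lemma sum_nat1_perm (V : nmodType) n (s : 'S_n) (F : 'I_n -> V) (G : nat -> V) :
  (forall i, F (s i) = G i.+1) -> \sum_c F c = \sum_(1 <= j < n.+1) G j.
Proof.
move=> FG; rewrite (reindex_inj (@perm_inj _ s)) big_nat1_ord.
by apply: eq_bigr => i _; rewrite FG.
Qed.

Lemma big_cat_nat_if (V : nmodType) m n (F1 F2 : nat -> V) : (m <= n)%N ->
  \sum_(1 <= j < m.+1) F1 j + \sum_(m + 1 <= j < n.+1) F2 j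
  = \sum_(1 <= j < n.+1) (if (j <= m)%N then F1 j else F2 j).
Proof.
move=> le_mn; rewrite [RHS](big_cat_nat _ (n := m.+1)) //= addn1.
by congr (_ + _); apply: eq_big_nat => j /andP[j_ge j_lt]; case: leqP => //; lia.
Qed.

Lemma sum_nat_ge0_eq0 (R : numDomainType) m p (F : nat -> R) :
  (forall j, (m <= j < p)%N -> 0 <= F j) -> \sum_(m <= j < p) F j = 0 ->
  forall j, (m <= j < p)%N -> F j = 0.
Proof.
move=> F_ge0 /eqP; rewrite big_nat_cond psumr_eq0 => [/allP F0 j j_mp|j /andP[]].
by apply/eqP; have := F0 j; rewrite mem_index_iota j_mp => /(_ isT).
by move=> /F_ge0.
Qed.

Lemma sum_nat_shift01_eq0 m q (g : nat -> int) :
  (forall j, (m <= j < q)%N -> g j = 0 \/ g j = -1) -> \sum_(m <= j < q) g j = 0 ->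
  forall j, (m <= j < q)%N -> g j = 0.
Proof.
move=> g01 sum_g j j_range; apply/eqP; rewrite -oppr_eq0; apply/eqP.
apply: (sum_nat_ge0_eq0 (F := fun j => - g j)) j_range.
  by move=> i /g01[]->.
by rewrite sumrN sum_g oppr0.
Qed.

Lemma prod_XsubC_perm (F : fieldType) n (mu : nat -> F) (f : 'I_n -> F) :
  \prod_(1 <= j < n.+1) ('X - (mu j)%:P) = \prod_(c < n) ('X - (f c)%:P) ->
  exists s : 'S_n, forall i : 'I_n, mu i.+1 = f (s i).
Proof.
pose smu := [tuple mu i.+1 | i < n]; pose sf := [tuple f i | i < n].
have prod_tuple (t : n.-tuple F) : \prod_(x <- t) ('X - x%:P) = \prod_i ('X - (tnth t i)%:P).
  by rewrite big_tuple.
move=> eq_prod; have /tuple_permP[s smu_sf] : perm_eq smu sf.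
  apply: prod_XsubC_eq; rewrite !prod_tuple.
  under eq_bigr do rewrite tnth_mktuple; under [RHS]eq_bigr do rewrite tnth_mktuple.
  by rewrite -eq_prod big_nat1_ord.
exists s => i; have := congr1 (fun t : seq F => nth 0 t i) smu_sf.
by rewrite -!tnth_nth !tnth_mktuple.
Qed.

Lemma char_poly_similar (R : comUnitRingType) n (P A : 'M[R]_n) : P \in unitmx ->
  char_poly (invmx P *m A *m P) = char_poly A.
Proof.
move=> P_unit; rewrite /char_poly /char_poly_mx.
set Pi := map_mx polyC (invmx P); set Pp := map_mx polyC P.
have PiPp : Pi *m Pp = 1%:M by rewrite -map_mxM mulVmx // map_mx1.
have -> : 'X%:M - map_mx polyC (invmx P *m A *m P) = Pi *m ('X%:M - map_mx polyC A) *m Pp.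
  rewrite !map_mxM mulmxBr mulmxBl -/Pi -/Pp; congr (_ - _).
  by rewrite scalar_mxC -mulmxA PiPp mulmx1.
by rewrite !det_mulmx mulrAC -det_mulmx PiPp det1 mul1r.
Qed.

Section ExpI.
Variable R : realType.
Local Notation pi := (@pi R).

Definition expi (t : R) : R[i] := Complex (cos t) (sin t).

Lemma periodicz (U V : zmodType) (f : U -> V) (T : U) :
  periodic f T -> forall (m : int) (a : U), f (a + T *~ m) = f a.
Proof.
move=> fT [] m a; first exact: periodicn.
by rewrite NegzE mulrNz -{2}[a](subrK (T *+ m.+1)) (periodicn fT).
Qed.

Lemma expi_2piz (t : R) (m : int) : expi (t + 2 * m%:~R * pi) = expi t.
Proof.
have -> : 2 * m%:~R * pi = pi *+ 2 *~ m by rewrite -mulrzr -mulr_natl; ring.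
by rewrite /expi (periodicz (@cosD2pi R)) (periodicz (@sinD2pi R)).
Qed.

Lemma modz_expi t : Defs.modz (expi t) = 1.
Proof. by rewrite /Defs.modz /= cos2Dsin2 sqrtr1. Qed.

Lemma argz_expi t : - pi < t <= pi -> argz (expi t) = t.
Proof.
move=> /andP[t_gt t_le]; rewrite /argz modz_expi divr1 /=.
have [t_ge0|t_lt0] := leP 0 t.
  by rewrite sin_ge0_pi ?t_ge0 // cosK // in_itv /= t_ge0.
have -> : (0 <= sin t) = false.
  by apply/negbTE; rewrite -ltNge -oppr_gt0 -sinN sin_gt0_pi // oppr_gt0 t_lt0 ltrNl.
by rewrite cosKN ?opprK // (ltW t_lt0) ltW.
Qed.

Definition winding (l : R) : int := Num.ceil ((l - pi) / (pi *+ 2)).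

Lemma winding_itv l : - pi < l - 2 * (winding l)%:~R * pi <= pi.
Proof.
have pi_gt0 := pi_gt0 R; have pi2_gt0 : 0 < pi *+ 2 by rewrite mulrn_wgt0.
have /andP[] := ceil_itv ((l - pi) / (pi *+ 2)); rewrite -/(winding l).
rewrite ltr_pdivlMr // ler_pdivrMr // intrB mulrBl mul1r -mulr_natl.
by move=> ? ?; apply/andP; split; lra.
Qed.

Lemma argz_expiE l : argz (expi l) = l - 2 * (winding l)%:~R * pi.
Proof.
rewrite -(argz_expi (winding_itv l)); congr argz.
by rewrite -[in LHS](subrK (2 * (winding l)%:~R * pi) l) expi_2piz.
Qed.

Lemma argz_expi_itv l : - pi < argz (expi l) <= pi.
Proof. by rewrite argz_expiE winding_itv. Qed.

Lemma expi_argz l : expi (argz (expi l)) = expi l.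
Proof. by rewrite -{2}(subrK (2 * (winding l)%:~R * pi) l) expi_2piz argz_expiE. Qed.

End ExpI.

Section ExpSeries.
Variable R : realType.
Local Notation C := R[i].
Local Notation Re := (@complex.Re R).
Local Notation Im := (@complex.Im R).

Lemma ReM (x y : C) : Re (x * y) = Re x * Re y - Im x * Im y.
Proof. by case: x => a b; case: y. Qed.

Lemma ImM (x y : C) : Im (x * y) = Re x * Im y + Im x * Re y.
Proof. by case: x => a b; case: y. Qed.

(* convergence in [C] is taken componentwise, as in the definition of [mexp] *)
Definition cvgReIm (u : nat -> C) (z : C) :=
  (fun N => Re (u N)) @ \oo --> Re z /\ (fun N => Im (u N)) @ \oo --> Im z.

Lemma cvgReIm_lim u z : cvgReIm u z ->
  Complex (limn (fun N => Re (u N))) (limn (fun N => Im (u N))) = z.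
Proof. by case: z => a b [ua ub]; rewrite (cvg_lim _ ua) // (cvg_lim _ ub). Qed.

Lemma cvgReImD u v a b : cvgReIm u a -> cvgReIm v b ->
  cvgReIm (fun N => u N + v N) (a + b).
Proof.
move=> [ua ua'] [vb vb']; split; rewrite raddfD /=.
  by under eq_cvg do rewrite raddfD; exact: cvgD.
by under eq_cvg do rewrite raddfD; exact: cvgD.
Qed.

Lemma cvgReImMl (c : C) u a : cvgReIm u a -> cvgReIm (fun N => c * u N) (c * a).
Proof.
move=> [ua ua']; split; rewrite ?ReM ?ImM.
  by under eq_cvg do rewrite ReM; apply: cvgB; apply: cvgM => //; exact: cvg_cst.
by under eq_cvg do rewrite ImM; apply: cvgD; apply: cvgM => //; exact: cvg_cst.
Qed.

Lemma cvgReIm_sum (I : Type) (r : seq I) (u : I -> nat -> C) (z : I -> C) :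
  (forall i, cvgReIm (u i) (z i)) ->
  cvgReIm (fun N => \sum_(i <- r) u i N) (\sum_(i <- r) z i).
Proof.
move=> uz; elim: r => [|x r IHr].
  by rewrite big_nil; split=> /=; under eq_cvg do rewrite big_nil; exact: cvg_cst.
have [ux ux'] := cvgReImD (uz x) IHr.
by rewrite big_cons; split=> /=; under eq_cvg do rewrite big_cons.
Qed.

Definition exp_psumC (z : C) (N : nat) : C := \sum_(k < N) ((k`!)%:R)^-1 * z ^+ k.

Lemma expr_iR_double (l : R) m :
  (Complex 0 l) ^+ m.*2 = Complex ((-1) ^+ m * l ^+ m.*2) 0.
Proof.
elim: m => [|m IHm]; first by rewrite expr0 mul1r.
rewrite doubleS !exprS IHm; apply/eqP; rewrite eq_complex /=.
by apply/andP; split; apply/eqP; ring.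
Qed.

Lemma expr_iR_doubleS (l : R) m :
  (Complex 0 l) ^+ m.*2.+1 = Complex 0 ((-1) ^+ m * l ^+ m.*2.+1).
Proof.
rewrite exprS expr_iR_double; apply/eqP; rewrite eq_complex /= exprS.
by apply/andP; split; apply/eqP; ring.
Qed.

Lemma natrC_inv m : (m%:R : C)^-1 = Complex (m%:R^-1) 0.
Proof.
have -> : (m%:R : C) = Complex m%:R 0 by rewrite -[Complex _ 0]/(real_complex R _) rmorph_nat.
by rewrite -[Complex _ 0]/(real_complex R _) -[Complex (_^-1) 0]/(real_complex R _) fmorphV.
Qed.

Lemma exp_psumC_iR_term (l : R) k :
  Re (((k`!)%:R)^-1 * (Complex 0 l) ^+ k) = cos_coeff l k /\
  Im (((k`!)%:R)^-1 * (Complex 0 l) ^+ k) = sin_coeff l k.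
Proof.
rewrite natrC_inv cos_coeffE sin_coeffE /=.
have [[m ->]|[m ->]] : {m | k = m.*2} + {m | k = m.*2.+1}.
- case: (boolP (odd k)) => k_odd; [right|left]; exists k./2.
    by rewrite -[LHS]odd_double_half k_odd.
  by rewrite -[LHS]odd_double_half (negbTE k_odd).
- by rewrite expr_iR_double /= odd_double doubleK /=; split; ring.
- by rewrite expr_iR_doubleS /= odd_double /= doubleK; split; ring.
Qed.

Lemma cvgReIm_exp_psumC_iR (l : R) : cvgReIm (exp_psumC (Complex 0 l)) (expi l).
Proof.
have ReIm_psum N : Re (exp_psumC (Complex 0 l) N) = series (cos_coeff l) N /\
                   Im (exp_psumC (Complex 0 l) N) = series (sin_coeff l) N.
  rewrite /exp_psumC /series /= !big_mkord !raddf_sum.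
  by split; apply: eq_bigr => k _; have [] := exp_psumC_iR_term l k.
split=> /=.
  rewrite cos.unlock; under eq_cvg do rewrite (ReIm_psum _).1.
  exact: is_cvg_series_cos_coeff.
rewrite sin.unlock; under eq_cvg do rewrite (ReIm_psum _).2.
exact: is_cvg_series_sin_coeff.
Qed.

End ExpSeries.

Section UnitaryDiag.
Variables (C : numClosedFieldType) (n : nat).
Local Open Scope sesquilinear_scope.
Implicit Types (P : 'M[C]_n) (d e : 'rV[C]_n).

Definition udiag P d : 'M[C]_n := P ^t* *m diag_mx d *m P.

Lemma udiagN P d : udiag P (- d) = - udiag P d.
Proof. by rewrite /udiag linearN /= mulmxN mulNmx. Qed.

Lemma udiagM P d e : P \is unitarymx ->
  udiag P d *m udiag P e = udiag P (\row_c (d 0 c * e 0 c)).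
Proof.
move=> P_unitary; rewrite /udiag !mulmxA mulmxtVK // -[_ *m diag_mx e]mulmxA.
congr (_ *m _ *m _); apply/matrixP => i j; rewrite mul_diag_mx !mxE.
by case: eqP => [->|]; rewrite ?mulr1n ?mulr0n ?mulr0.
Qed.

Lemma udiag1 P : P \is unitarymx -> udiag P (const_mx 1) = 1%:M.
Proof.
by move=> P_unitary; rewrite /udiag diag_const_mx mulmx1; apply/mulmx1C/unitarymxP.
Qed.

Lemma udiagX P d m : P \is unitarymx -> udiag P d ^+ m = udiag P (\row_c (d 0 c ^+ m)).
Proof.
move=> P_unitary; elim: m => [|m IHm].
  rewrite expr0 -[1 : 'M_n]/(1%:M) -(udiag1 P_unitary); congr udiag.
  by apply/rowP => c; rewrite !mxE.
rewrite exprS IHm [_ * _](udiagM _ _ P_unitary); congr udiag.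
by apply/rowP => c; rewrite !mxE exprS.
Qed.

Lemma char_poly_udiag P d : P \is unitarymx ->
  char_poly (udiag P d) = \prod_c ('X - (d 0 c)%:P).
Proof.
move=> P_unitary; rewrite /udiag -invmx_unitary // char_poly_similar ?unitarymx_unit //.
rewrite char_poly_trig ?diag_mx_is_trig //.
by apply: eq_bigr => c _; rewrite mxE eqxx mulr1n.
Qed.

Lemma mxtrace_udiag P d : P \is unitarymx -> \tr (udiag P d) = \sum_c d 0 c.
Proof.
by move=> /unitarymxP PPt; rewrite /udiag mxtrace_mulC mulmxA PPt mul1mx mxtrace_diag.
Qed.

Lemma adj_udiag P d : (udiag P d) ^t* = udiag P (map_mx Num.Def.conjC d).
Proof. by rewrite /udiag !trmx_mul !map_mxM trmxCK mulmxA tr_diag_mx map_diag_mx. Qed.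

Lemma udiag_inj P d e : P \is unitarymx -> udiag P d = udiag P e -> d = e.
Proof.
move=> P_unitary de.
have udiagK f : P *m udiag P f *m P ^t* = diag_mx f.
  by have /unitarymxP PPt := P_unitary; rewrite /udiag !mulmxA mulmxtVK // PPt mul1mx.
apply/rowP => c; have := congr1 (fun M : 'M[C]_n => M c c) (udiagK d).
by rewrite de udiagK !mxE eqxx !mulr1n.
Qed.

Lemma normalmx_udiag (X : 'M[C]_n) : X \is normalmx ->
  X = udiag (spectralmx X) (spectral_diag X).
Proof. by move=> /orthomx_spectralP; rewrite invmx_unitary // spectral_unitarymx. Qed.

End UnitaryDiag.

Section SkewHermitian.
Variables (R : realType) (n : nat).
Local Notation C := R[i].
Local Open Scope sesquilinear_scope.
Implicit Types (P X : 'M[C]_n) (lam : 'I_n -> R).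

Local Notation iR lam := (\row_c Complex 0 (lam c)).

Lemma cadjE X : cadj X = X ^t*.
Proof. by apply/matrixP => i j; rewrite !mxE; case: (X j i). Qed.

Lemma cadj_udiag_iR P lam : cadj (udiag P (iR lam)) = - udiag P (iR lam).
Proof.
rewrite cadjE adj_udiag -udiagN; congr udiag.
by apply/rowP => c; rewrite !mxE; apply/eqP; rewrite eq_complex /= oppr0 !eqxx.
Qed.

Lemma sum_iR (I : Type) (r : seq I) (F : I -> R) :
  \sum_(i <- r) Complex 0 (F i) = Complex 0 (\sum_(i <- r) F i).
Proof.
elim: r => [|x r IHr]; first by rewrite !big_nil.
by rewrite !big_cons IHr; apply/eqP; rewrite eq_complex /= addr0 !eqxx.
Qed.

Lemma su_udiag_iR P lam : P \is unitarymx ->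
  su (udiag P (iR lam)) <-> \sum_c lam c = 0.
Proof.
move=> P_unitary; rewrite /su cadj_udiag_iR mxtrace_udiag //.
under eq_bigr do rewrite mxE; rewrite sum_iR.
by split=> [[_ /(congr1 (@complex.Im R))] //|->].
Qed.

Lemma su_udiag X : su X -> exists2 P, P \is unitarymx & exists lam, X = udiag P (iR lam).
Proof.
case; rewrite cadjE => adjX _.
have X_normal : X \is normalmx by apply/normalmxP; rewrite adjX mulmxN mulNmx.
have S_unitary := spectral_unitarymx X; have XE := normalmx_udiag X_normal.
exists (spectralmx X) => //; exists (fun c => complex.Im (spectral_diag X 0 c)).
rewrite {1}XE; congr udiag; apply/rowP => c; rewrite mxE.
have /(congr1 (fun d : 'rV_n => d 0 c)) :
    map_mx Num.Def.conjC (spectral_diag X) = - spectral_diag X.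
  by apply: (udiag_inj S_unitary); rewrite -adj_udiag udiagN -XE adjX.
rewrite !mxE; case: (spectral_diag X 0 c) => a b /eqP.
by rewrite eq_complex /= => /andP[/eqP a_eq _]; congr Complex; lra.
Qed.

Lemma frob2_udiag_iR P lam : P \is unitarymx ->
  frob2 (udiag P (iR lam)) = \sum_c lam c ^+ 2.
Proof.
move=> P_unitary; rewrite /frob2 cadj_udiag_iR -udiagN udiagM // mxtrace_udiag //.
by rewrite raddf_sum; apply: eq_bigr => c _; rewrite !mxE /=; ring.
Qed.

Lemma exp_psum_udiag P d N : P \is unitarymx ->
  exp_psum (udiag P d) N = udiag P (\row_c exp_psumC (d 0 c) N).
Proof.
move=> P_unitary; rewrite /exp_psum.
under eq_bigr => k _ do rewrite udiagX // /udiag scalemxAl scalemxAr.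
rewrite -mulmx_suml -mulmx_sumr; congr (_ *m _ *m _).
apply/matrixP => a b; rewrite summxE !mxE /exp_psumC.
under eq_bigr do rewrite !mxE.
have [->|_] := eqVneq a b; first by apply: eq_bigr => k _; rewrite mulr1n.
by rewrite mulr0n big1 // => k _; rewrite mulr0n mulr0.
Qed.

Lemma mexp_udiag_iR P lam : P \is unitarymx ->
  mexp (udiag P (iR lam)) = udiag P (\row_c expi (lam c)).
Proof.
move=> P_unitary; apply/matrixP => i j; rewrite /mexp mxE; apply: cvgReIm_lim.
have entryE (d : 'rV[C]_n) : udiag P d i j = \sum_c (P ^t* i c * P c j) * d 0 c.
  by rewrite /udiag mxE; apply: eq_bigr => c _; rewrite mul_mx_diag mxE mulrAC.
have [cvRe cvIm] := cvgReIm_sum (index_enum 'I_n) (fun c => cvgReImMl (P ^t* i c * P c j)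
                                (cvgReIm_exp_psumC_iR (lam c))).
rewrite entryE; under eq_bigr do rewrite mxE.
have psumE N : exp_psum (udiag P (iR lam)) N i j =
    \sum_c (P ^t* i c * P c j) * exp_psumC (Complex 0 (lam c)) N.
  by rewrite exp_psum_udiag // entryE; apply: eq_bigr => c _; rewrite !mxE.
by split=> /=; under eq_cvg do rewrite psumE.
Qed.

End SkewHermitian.

Definition opt_shift (n k j : nat) : int := if (j <= n - k)%N then 0 else -1.

Lemma sum_opt_shift n k : (k <= n)%N -> \sum_(1 <= j < n.+1) opt_shift n k j = - k%:Z.
Proof.
move=> k_le_n; rewrite -big_cat_nat_if ?leq_subr // big1 // add0r sumr_const_nat.
have -> : (n.+1 - (n - k + 1) = k)%N by lia.
by rewrite mulNrn natz.
Qed.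

Section ShiftCost.
Variables (R : realFieldType) (p : R).
Hypothesis p_gt0 : 0 < p.

(* [(t + 2 g p)^2 = t^2 + 4 p (shift_cost a t g) + 4 p (a - p) g] *)
Definition shift_cost (a t : R) (g : int) : R := g%:~R * (t - a + p * (g%:~R + 1)).

Lemma int_cases (g : int) : [\/ 1 <= g, g = 0, g = -1 | g <= -2].
Proof.
have : (1 <= g) || (g == 0) || (g == -1) || (g <= -2) by lia.
case/orP=> [/orP[/orP[?|/eqP?]|/eqP?]|?];
  by [constructor 1|constructor 2|constructor 3|constructor 4].
Qed.

Lemma shift_cost_ge0 a t g : - p < t -> t <= a -> a <= p ->
  0 <= shift_cost a t g /\ (shift_cost a t g = 0 -> g = 0 \/ g = -1 /\ t = a).
Proof.
rewrite /shift_cost => t_gt t_le_a a_le.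
have [g_ge1|->|->|g_le] := int_cases g.
- have g_ge1R : 1 <= g%:~R :> R by rewrite ler1z.
  have pg_ge0 : 0 <= p * (g%:~R - 1) by apply: mulr_ge0; lra.
  have pgE : p * (g%:~R + 1) = p * (g%:~R - 1) + 2 * p by ring.
  have cost_gt0 : 0 < g%:~R * (t - a + p * (g%:~R + 1)).
    by rewrite pgE; apply: mulr_gt0; lra.
  by split=> [|cost0]; [exact: ltW|move: cost_gt0; rewrite cost0 ltxx].
- by rewrite mul0r; split=> //; left.
- rewrite addNr mulr0 addr0 mulN1r; split=> [|/eqP]; first lra.
  by rewrite oppr_eq0 subr_eq0 => /eqP; right.
- have g_leR : g%:~R <= -2 :> R by rewrite -[-2]/((-2)%:~R) ler_int.
  have pg_le0 : p * (g%:~R + 2) <= 0 by apply: mulr_ge0_le0; lra.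
  have pgE : p * (g%:~R + 1) = p * (g%:~R + 2) - p by ring.
  have cost_gt0 : 0 < g%:~R * (t - a + p * (g%:~R + 1)).
    by rewrite pgE -mulrNN; apply: mulr_gt0; lra.
  by split=> [|cost0]; [exact: ltW|move: cost_gt0; rewrite cost0 ltxx].
Qed.

Lemma shift_cost_ge a t g : - p < a -> a <= t -> t <= p ->
  a - t <= shift_cost a t g /\ (shift_cost a t g = a - t -> g = -1 \/ g = 0 /\ t = a).
Proof.
rewrite /shift_cost => a_gt a_le_t t_le.
have costE : g%:~R * (t - a + p * (g%:~R + 1)) - (a - t) = (g%:~R + 1) * (t - a + p * g%:~R).
  by ring.
suff [cost_ge cost_eq] : 0 <= (g%:~R + 1) * (t - a + p * g%:~R) /\
    ((g%:~R + 1) * (t - a + p * g%:~R) = 0 -> g = -1 \/ g = 0 /\ t = a).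
  split=> [|cost_min]; first by rewrite -subr_ge0 costE.
  by apply: cost_eq; rewrite -costE cost_min subrr.
have [g_ge1|->|->|g_le] := int_cases g.
- have g_ge1R : 1 <= g%:~R :> R by rewrite ler1z.
  have pg_ge0 : 0 <= p * (g%:~R - 1) by apply: mulr_ge0; lra.
  have pgE : p * g%:~R = p * (g%:~R - 1) + p by ring.
  have cost_gt0 : 0 < (g%:~R + 1) * (t - a + p * g%:~R) by rewrite pgE; apply: mulr_gt0; lra.
  by split=> [|cost0]; [exact: ltW|move: cost_gt0; rewrite cost0 ltxx].
- by rewrite mulr0 addr0 add0r mul1r; split=> [|/eqP]; [lra|rewrite subr_eq0 => /eqP; right].
- by rewrite addNr mul0r; split=> //; left.
- have g_leR : g%:~R <= -2 :> R by rewrite -[-2]/((-2)%:~R) ler_int.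
  have pg_le0 : p * (g%:~R + 2) <= 0 by apply: mulr_ge0_le0; lra.
  have pgE : p * g%:~R = p * (g%:~R + 2) - 2 * p by ring.
  have cost_gt0 : 0 < (g%:~R + 1) * (t - a + p * g%:~R).
    by rewrite pgE -mulrNN; apply: mulr_gt0; lra.
  by split=> [|cost0]; [exact: ltW|move: cost_gt0; rewrite cost0 ltxx].
Qed.

Variables (n k : nat) (th : nat -> R).
Hypothesis k_lt_n : (k < n)%N.
Hypothesis th_sorted : forall i j, (1 <= i)%N -> (i <= j)%N -> (j <= n)%N -> th i <= th j.
Hypothesis th_itv : forall j, (1 <= j <= n)%N -> - p < th j <= p.

Definition min_sqsum : R := \sum_(1 <= j < (n - k).+1) th j ^+ 2
  + \sum_(n - k + 1 <= j < n.+1) (2 * p - th j) ^+ 2.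

Definition excess (g : nat -> int) (j : nat) : R :=
  shift_cost (th (n - k)) (th j) (g j) - (if (j <= n - k)%N then 0 else th (n - k) - th j).

Lemma sqsum_shiftE (g : nat -> int) : \sum_(1 <= j < n.+1) g j = - k%:Z ->
  \sum_(1 <= j < n.+1) (th j + 2 * (g j)%:~R * p) ^+ 2
  = min_sqsum + 4 * p * \sum_(1 <= j < n.+1) excess g j.
Proof.
move=> sum_g; set a := th (n - k).
have termE j : (th j + 2 * (g j)%:~R * p) ^+ 2 =
    (if (j <= n - k)%N then th j ^+ 2 else (2 * p - th j) ^+ 2) + 4 * p * excess g j
    + 4 * p * (a - p) * (g j - opt_shift n k j)%:~R.
  by rewrite /excess /shift_cost /opt_shift -/a intrB; case: ifP => _; ring.
have sum_g_opt : \sum_(1 <= j < n.+1) (g j - opt_shift n k j) = 0.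
  by rewrite sumrB sum_g sum_opt_shift ?subrr // ltnW.
rewrite (eq_bigr _ (fun j _ => termE j)) 2!big_split /= -!mulr_sumr -rmorph_sum sum_g_opt.
by rewrite /min_sqsum big_cat_nat_if ?leq_subr // mulr0 addr0.
Qed.

Lemma th_nk_itv : - p < th (n - k) <= p.
Proof. by apply: th_itv; lia. Qed.

Lemma excess_ge0 g j : (1 <= j <= n)%N -> 0 <= excess g j.
Proof.
move=> j_range; have /andP[a_gt a_le] := th_nk_itv.
have /andP[t_gt t_le] := th_itv j_range; rewrite /excess.
case: leqP => [j_le|j_gt]; rewrite ?subr0.
  have t_le_a : th j <= th (n - k) by apply: th_sorted; lia.
  by have [] := shift_cost_ge0 (g j) t_gt t_le_a a_le.
have a_le_t : th (n - k) <= th j by apply: th_sorted; lia.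
by have [] := shift_cost_ge (g j) a_gt a_le_t t_le; rewrite subr_ge0.
Qed.

Lemma excess_eq0 g j : (1 <= j <= n)%N -> excess g j = 0 <->
  (j <= n - k)%N /\ (g j = 0 \/ g j = -1 /\ th j = th (n - k)) \/
  (n - k < j)%N /\ (g j = -1 \/ g j = 0 /\ th j = th (n - k)).
Proof.
move=> j_range; have /andP[a_gt a_le] := th_nk_itv.
have /andP[t_gt t_le] := th_itv j_range; rewrite /excess.
case: leqP => [j_le|j_gt]; rewrite ?subr0.
  have t_le_a : th j <= th (n - k) by apply: th_sorted; lia.
  have [_ cost0] := shift_cost_ge0 (g j) t_gt t_le_a a_le.
  split=> [/cost0|]; first by left.
  case=> -[] // _ [->|[-> ->]]; rewrite /shift_cost ?mul0r //.
  by rewrite subrr add0r addNr mulr0 mulr0.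
have a_le_t : th (n - k) <= th j by apply: th_sorted; lia.
have [_ cost_min] := shift_cost_ge (g j) a_gt a_le_t t_le.
split=> [/eqP|]; first by rewrite subr_eq0 => /eqP/cost_min; right.
case=> -[] // _ [->|[-> ->]]; rewrite /shift_cost.
  by rewrite addNr mulr0 addr0 mulN1r opprB subrr.
by rewrite mul0r !subrr.
Qed.

Lemma sqsum_shift_ge (g : nat -> int) : \sum_(1 <= j < n.+1) g j = - k%:Z ->
  min_sqsum <= \sum_(1 <= j < n.+1) (th j + 2 * (g j)%:~R * p) ^+ 2.
Proof.
move=> sum_g; rewrite sqsum_shiftE // lerDl; apply: mulr_ge0; first by rewrite mulr_ge0 // ltW.
by rewrite big_nat_cond; apply: sumr_ge0 => j /andP[j_range _]; exact: excess_ge0.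
Qed.

Lemma sqsum_shift_min (g : nat -> int) : \sum_(1 <= j < n.+1) g j = - k%:Z ->
  \sum_(1 <= j < n.+1) (th j + 2 * (g j)%:~R * p) ^+ 2 = min_sqsum <->
  forall j, (1 <= j <= n)%N -> excess g j = 0.
Proof.
move=> sum_g; rewrite sqsum_shiftE // -[RHS in _ = RHS]addr0.
split=> [/addrI/eqP|excess0].
  rewrite mulf_eq0 mulf_eq0 pnatr_eq0 (gt_eqF p_gt0) /= => /eqP.
  by apply: sum_nat_ge0_eq0 => j; exact: excess_ge0.
by rewrite big_nat_cond big1 ?mulr0 // => j /andP[/excess0].
Qed.

Lemma sqsum_opt_shift :
  \sum_(1 <= j < n.+1) (th j + 2 * (opt_shift n k j)%:~R * p) ^+ 2 = min_sqsum.
Proof.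
apply/(sqsum_shift_min (sum_opt_shift (ltnW k_lt_n))) => j j_range; apply/excess_eq0 => //.
by rewrite /opt_shift; case: leqP; [left|right]; split=> //; left.
Qed.

Lemma excess_eq0_shift g j : (1 <= j <= n)%N -> excess g j = 0 -> g j = 0 \/ g j = -1.
Proof.
by move=> j_range /(excess_eq0 g j_range) [[_ [->|[-> _]]]|[_ [->|[-> _]]]]; by [left|right].
Qed.

Lemma excess_all0_k0 (g : nat -> int) : \sum_(1 <= j < n.+1) g j = - k%:Z -> k = 0%N ->
  (forall j, (1 <= j <= n)%N -> excess g j = 0) <-> (forall j, (1 <= j <= n)%N -> g j = 0).
Proof.
move=> sum_g k0; split=> [g_excess0|g0 j j_range].
  apply: (@sum_nat_shift01_eq0 1 n.+1); last by rewrite sum_g k0.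
  by move=> j j_range; apply: excess_eq0_shift (g_excess0 j j_range).
by apply/excess_eq0 => //; left; rewrite k0 subn0 g0 //; split; [lia|left].
Qed.

Lemma excess_all0_gap (g : nat -> int) : \sum_(1 <= j < n.+1) g j = - k%:Z ->
  th (n - k) < th (n - k + 1) ->
  (forall j, (1 <= j <= n)%N -> excess g j = 0) <->
  (forall j, (1 <= j <= n - k)%N -> g j = 0) /\ (forall l, (n - k + 1 <= l <= n)%N -> g l = -1).
Proof.
move=> sum_g gap; split=> [g_excess0|[g0 g1] j j_range]; last first.
  apply/excess_eq0 => //; case: leqP => [j_le|j_gt]; [left|right]; split=> //; left.
    by apply: g0; lia.
  by apply: g1; lia.
have top l : (n - k + 1 <= l <= n)%N -> g l = -1.
  move=> l_range; have l_range' : (1 <= l <= n)%N by lia.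
  case: ((excess_eq0 g l_range').1 (g_excess0 l l_range')) => [[l_le _]|[_ [//|[_ th_eq]]]].
    by lia.
  have th_le : th (n - k + 1) <= th l by apply: th_sorted; lia.
  by move: gap; rewrite -th_eq ltNge th_le.
split=> //; apply: (@sum_nat_shift01_eq0 1 (n - k).+1) => [j j_range|].
  by apply: excess_eq0_shift (g_excess0 j _); lia.
have top_sum : \sum_((n - k).+1 <= j < n.+1) g j = - k%:Z.
  rewrite big_nat_cond (eq_bigr (fun=> -1)) => [|j /andP[j_range _]]; last by apply: top; lia.
  rewrite -big_nat_cond sumr_const_nat.
  have -> : (n.+1 - (n - k).+1 = k)%N by lia.
  by rewrite mulNrn natz.
move: sum_g; rewrite (big_cat_nat _ (n := (n - k).+1)) //=; last by lia.
by rewrite top_sum -{2}[- k%:Z]add0r => /addIr.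
Qed.

Lemma excess_all0_tie (g : nat -> int) : th (n - k) = th (n - k + 1) ->
  (forall j, (1 <= j <= n)%N -> excess g j = 0) <->
  (forall r, (1 <= r <= n - k - 1)%N -> th r != th (n - k) -> g r = 0) /\
  (forall t, (n - k + 2 <= t <= n)%N -> th t != th (n - k) -> g t = -1) /\
  (forall m, (1 <= m <= n)%N -> th m = th (n - k) -> g m = 0 \/ g m = -1).
Proof.
move=> tie; split=> [g_excess0|[g0 [g1 g01]] j j_range].
  have excess0 j (j_range : (1 <= j <= n)%N) := (excess_eq0 g j_range).1 (g_excess0 j j_range).
  split; [|split] => [r r_range th_ne|t t_range th_ne|m m_range _].
  - have r_range' : (1 <= r <= n)%N by lia.
    case: (excess0 r r_range') => [[_ [//|[_ th_eq]]]|[r_gt _]]; last by lia.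
    by rewrite th_eq eqxx in th_ne.
  - have t_range' : (1 <= t <= n)%N by lia.
    case: (excess0 t t_range') => [[t_le _]|[_ [//|[_ th_eq]]]]; first by lia.
    by rewrite th_eq eqxx in th_ne.
  - exact: excess_eq0_shift (g_excess0 m m_range).
apply/excess_eq0 => //; have [th_eq|th_ne] := eqVneq (th j) (th (n - k)).
  by case: leqP => j_le; [left|right]; split=> //; have [] := g01 j j_range th_eq; tauto.
case: leqP => j_le; [left|right]; split=> //; left.
  have j_ne : j != (n - k)%N by apply: contraNneq th_ne => ->.
  by apply: g0 => //; lia.
have j_ne : j != (n - k + 1)%N by apply: contraNneq th_ne => ->; rewrite tie.
by apply: g1 => //; lia.
Qed.

End ShiftCost.

Section ExpPreimages.
Variable R : realType.
Local Notation C := R[i].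
Local Notation pi := (@pi R).
Variables (n : nat) (Q : 'M[C]_n) (mu : nat -> C) (k : nat) (X0 : 'M[C]_n).
Hypothesis n_ge2 : (2 <= n)%N.
Hypothesis char_poly_Q : char_poly Q = \prod_(1 <= j < n.+1) ('X - (mu j)%:P).
Hypothesis argz_mu_sorted :
  forall i j, (1 <= i)%N -> (i <= j)%N -> (j <= n)%N -> argz (mu i) <= argz (mu j).
Hypothesis zeta_mu : zeta n mu = k%:R.
Hypotheses (su_X0 : su X0) (mexp_X0 : mexp X0 = Q).

Lemma exp_preimage_spectrum X : su X -> mexp X = Q ->
  exists P (lam : 'I_n -> R) (s : 'S_n), [/\ P \is unitarymx,
    X = udiag P (\row_c Complex 0 (lam c)) & forall i : 'I_n, mu i.+1 = expi (lam (s i))].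
Proof.
move=> suX expX; have [P P_unitary [lam XE]] := su_udiag suX.
have [|s mu_lam] := @prod_XsubC_perm _ n mu (fun c => expi (lam c)).
  rewrite -char_poly_Q -expX XE mexp_udiag_iR // char_poly_udiag //.
  by apply: eq_bigr => c _; rewrite mxE.
by exists P, lam, s.
Qed.

Lemma mu_expi j : (1 <= j <= n)%N -> exists l, mu j = expi l.
Proof.
move=> /andP[j_ge1 j_le]; have [P [lam [s [_ _ mu_lam]]]] := exp_preimage_spectrum su_X0 mexp_X0.
have j_lt : (j.-1 < n)%N by rewrite prednK.
by exists (lam (s (Ordinal j_lt))); rewrite -mu_lam prednK.
Qed.

Lemma muE j : (1 <= j <= n)%N -> mu j = expi (argz (mu j)).
Proof. by move=> /mu_expi[l ->]; rewrite expi_argz. Qed.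

Lemma argz_mu_itv j : (1 <= j <= n)%N -> - pi < argz (mu j) <= pi.
Proof. by move=> /mu_expi[l ->]; exact: argz_expi_itv. Qed.

Lemma eq_mu_argz i j : (1 <= i <= n)%N -> (1 <= j <= n)%N ->
  (mu i == mu j) = (argz (mu i) == argz (mu j)).
Proof.
move=> i_range j_range; apply/eqP/eqP => [->//|th_eq].
by rewrite (muE i_range) (muE j_range) th_eq.
Qed.

Lemma sum_argz_mu : \sum_(1 <= j < n.+1) argz (mu j) = 2 * k%:R * pi.
Proof.
move: zeta_mu; rewrite /zeta => /(congr1 (fun x => 2 * pi * x)).
by rewrite mulrA divff ?mul1r ?mulf_neq0 ?gt_eqF ?pi_gt0 // => ->; ring.
Qed.

Lemma zeta_lt_n : (k < n)%N.
Proof.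
have : \sum_(1 <= j < n.+1) argz (mu j) <= \sum_(1 <= j < n.+1) pi.
  by apply: ler_sum_nat => j j_range; have /andP[] := argz_mu_itv j_range.
rewrite sumr_const_nat subn1 /= sum_argz_mu -[pi *+ n]mulr_natl ler_pM2r ?pi_gt0 //.
by rewrite -natrM ler_nat; lia.
Qed.

Lemma frob2_exp_preimage X : su X -> mexp X = Q -> exists2 g : nat -> int,
  \sum_(1 <= j < n.+1) g j = - k%:Z &
  frob2 X = \sum_(1 <= j < n.+1) (argz (mu j) + 2 * (g j)%:~R * pi) ^+ 2.
Proof.
move=> suX expX; have [P [lam [s [P_unitary XE mu_lam]]]] := exp_preimage_spectrum suX expX.
(* [g j] is the winding number of the eigenvalue matched with [mu j] *)
pose g j := oapp (fun i => winding (lam (s i))) (0 : int) (insub j.-1 : option 'I_n).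
have lamE i : lam (s i) = argz (mu i.+1) + 2 * (g i.+1)%:~R * pi.
  by rewrite /g /= valK /= mu_lam argz_expiE subrK.
have sum_lam : \sum_c lam c = 0 by apply/(su_udiag_iR _ P_unitary); rewrite -XE.
exists g; last first.
  rewrite XE frob2_udiag_iR //.
  apply: (sum_nat1_perm (s := s) (G := fun j => (argz (mu j) + 2 * (g j)%:~R * pi) ^+ 2)).
  by move=> i; rewrite lamE.
have : 2 * pi * (k%:R + \sum_(1 <= j < n.+1) (g j)%:~R) = \sum_c lam c.
  rewrite (sum_nat1_perm (G := fun j => argz (mu j) + 2 * (g j)%:~R * pi) lamE).
  rewrite big_split /= sum_argz_mu mulrDr mulr_sumr; congr (_ + _); first by ring.
  by apply: eq_bigr => j _; ring.
rewrite sum_lam => /eqP; rewrite mulf_eq0 mulf_eq0 pnatr_eq0 (gt_eqF (pi_gt0 R)) /=.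
rewrite addr_eq0 => /eqP k_eq.
by apply: (@intr_inj R); rewrite rmorph_sum /= mulrNz -[(k%:Z)%:~R]/(k%:R : R) k_eq opprK.
Qed.

Lemma exp_preimage_opt :
  exists2 X, su X /\ mexp X = Q & frob2 X = min_sqsum pi n k (fun j => argz (mu j)).
Proof.
have [P [lam [s [P_unitary X0E mu_lam]]]] := exp_preimage_spectrum su_X0 mexp_X0.
pose G j := argz (mu j) + 2 * (opt_shift n k j)%:~R * pi.
pose lam' c := G ((s^-1)%g c).+1.
have lam'E i : lam' (s i) = G i.+1 by rewrite /lam' permK.
exists (udiag P (\row_c Complex 0 (lam' c))); last first.
  rewrite frob2_udiag_iR // -(sqsum_opt_shift (pi_gt0 R) zeta_lt_n argz_mu_sorted argz_mu_itv).
  by apply: (sum_nat1_perm (s := s)) => i; rewrite lam'E.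
split.
  apply/su_udiag_iR => //; rewrite (sum_nat1_perm lam'E) big_split /= sum_argz_mu.
  rewrite -mulr_suml -mulr_sumr -rmorph_sum (sum_opt_shift (ltnW zeta_lt_n)) /= mulrNz; ring.
rewrite -mexp_X0 X0E !mexp_udiag_iR //; congr udiag; apply/rowP => c; rewrite !mxE.
by rewrite -[c](permKV s) lam'E -mu_lam /G expi_2piz -muE //= ltn_ord.
Qed.

Local Notation S := (min_sqsum pi n k (fun j => argz (mu j))).

Lemma mQE : mQ Q = S.
Proof.
have [X preX frobX] := exp_preimage_opt.
set E := [set frob2 X | X in [set X | su X /\ mexp X = Q]].
have S_lb : lbound E S.
  move=> _ [Y [suY expY] <-]; have [g sum_g ->] := frob2_exp_preimage suY expY.
  exact: (sqsum_shift_ge (pi_gt0 R) zeta_lt_n argz_mu_sorted argz_mu_itv sum_g).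
have E_S : E S by exists X.
apply/eqP; rewrite eq_le lb_le_inf ?andbT //; last by exists S.
by apply: (ge_inf _ E_S); exists S.
Qed.

Variable h : nat -> int.
Hypothesis char_poly_X0 : char_poly X0 =
  \prod_(1 <= j < n.+1) ('X - (Complex 0 (argz (mu j) + 2 * (h j)%:~R * pi))%:P).
Hypothesis sum_h : \sum_(1 <= j < n.+1) h j = - k%:Z.

Lemma frob2_X0 : frob2 X0 = \sum_(1 <= j < n.+1) (argz (mu j) + 2 * (h j)%:~R * pi) ^+ 2.
Proof.
have [P P_unitary [lam X0E]] := su_udiag su_X0.
have [|s hs] := @prod_XsubC_perm _ n (fun j => Complex 0 (argz (mu j) + 2 * (h j)%:~R * pi))
                                     (fun c => Complex 0 (lam c)).
  by rewrite -char_poly_X0 X0E char_poly_udiag //; apply: eq_bigr => c _; rewrite mxE.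
rewrite X0E frob2_udiag_iR //; apply: (sum_nat1_perm (s := s)) => i.
by case: (hs i) => <-.
Qed.

Lemma Theta_X0E : Theta Q X0 <->
  forall j, (1 <= j <= n)%N -> excess pi n k (fun j => argz (mu j)) h j = 0.
Proof.
apply: iff_trans (sqsum_shift_min (pi_gt0 R) zeta_lt_n argz_mu_sorted argz_mu_itv sum_h).
by rewrite -frob2_X0 -mQE; split=> [[_ []]|].
Qed.

Lemma Theta_X0_k0 : k = 0%N -> Theta Q X0 <-> (forall j, (1 <= j <= n)%N -> h j = 0).
Proof.
move=> k0; apply: iff_trans Theta_X0E _.
exact: (excess_all0_k0 (pi_gt0 R) zeta_lt_n argz_mu_sorted argz_mu_itv sum_h k0).
Qed.

Lemma Theta_X0_gap : (1 <= k)%N -> mu (n - k) != mu (n - k + 1) ->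
  Theta Q X0 <-> (forall j, (1 <= j <= n - k)%N -> h j = 0) /\
                 (forall l, (n - k + 1 <= l <= n)%N -> h l = -1).
Proof.
move=> k_ge1 mu_ne; apply: iff_trans Theta_X0E _.
apply: (excess_all0_gap (pi_gt0 R) zeta_lt_n argz_mu_sorted argz_mu_itv sum_h).
have k_lt_n := zeta_lt_n.
by rewrite lt_neqAle -eq_mu_argz ?mu_ne ?argz_mu_sorted //; lia.
Qed.

Lemma Theta_X0_tie : (1 <= k)%N -> mu (n - k) = mu (n - k + 1) ->
  Theta Q X0 <->
    (forall r, (1 <= r <= n - k - 1)%N -> mu r != mu (n - k) -> h r = 0) /\
    (forall t, (n - k + 2 <= t <= n)%N -> mu t != mu (n - k) -> h t = -1) /\
    (forall m, (1 <= m <= n)%N -> mu m = mu (n - k) -> h m = 0 \/ h m = -1).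
Proof.
move=> k_ge1 tie; have k_lt_n := zeta_lt_n; apply: iff_trans Theta_X0E _.
apply: iff_trans (excess_all0_tie (pi_gt0 R) zeta_lt_n argz_mu_sorted argz_mu_itv h _) _.
  by rewrite /= tie.
have eqE j : (1 <= j <= n)%N -> (mu j == mu (n - k)) = (argz (mu j) == argz (mu (n - k))).
  by move=> j_range; apply: eq_mu_argz; lia.
split=> -[h0 [h1 h01]]; (split; [|split]).
- by move=> r r_range; rewrite eqE; [exact: h0|lia].
- by move=> t t_range; rewrite eqE; [exact: h1|lia].
- by move=> m m_range mu_eq; apply: h01; rewrite //= mu_eq.
- by move=> r r_range; rewrite -eqE; [exact: h0|lia].
- by move=> t t_range; rewrite -eqE; [exact: h1|lia].
- by move=> m m_range /= /eqP; rewrite -eqE // => /eqP; exact: h01.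
Qed.

End ExpPreimages.

Theorem proposition2p8 (R : realType) (n : nat) (Q : 'M[R[i]]_n)
  (mu : nat -> R[i]) (k : nat) (X0 : 'M[R[i]]_n) (h : nat -> int) :
  (2 <= n)%N ->
  SU Q ->
  (* mu_1, ..., mu_n are the eigenvalues of Q with multiplicity *)
  char_poly Q = \prod_(1 <= j < n.+1) ('X - (mu j)%:P) ->
  (* ordered by nondecreasing principal argument *)
  (forall i j, (1 <= i)%N -> (i <= j)%N -> (j <= n)%N -> argz (mu i) <= argz (mu j)) ->
  (* zeta(Q) >= 0; zeta(Q) is an integer, written k *)
  zeta n mu = k%:R ->
  (* X0 in su_n, exp X0 = Q, with eigenvalues (arg mu_j + 2 h_j pi) i *)
  su X0 -> mexp X0 = Q ->
  char_poly X0 = \prod_(1 <= j < n.+1)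
      ('X - (Complex 0 (argz (mu j) + 2 * (h j)%:~R * pi))%:P) ->
  \sum_(1 <= j < n.+1) h j = - (k%:Z) ->
  (* (a) *)
  (k = 0%N ->
     mQ Q = \sum_(1 <= j < n.+1) (argz (mu j)) ^+ 2 /\
     (Theta Q X0 <-> (forall j, (1 <= j <= n)%N -> h j = 0))) /\
  (* (b) *)
  ((1 <= k)%N ->
     mQ Q = \sum_(1 <= j < (n - k).+1) (argz (mu j)) ^+ 2
            + \sum_(n - k + 1 <= j < n.+1) (2 * pi - argz (mu j)) ^+ 2 /\
     (mu (n - k)%N != mu (n - k + 1)%N ->
        (Theta Q X0 <->
           (forall j, (1 <= j <= n - k)%N -> h j = 0) /\
           (forall l, (n - k + 1 <= l <= n)%N -> h l = -1))) /\
     (mu (n - k)%N = mu (n - k + 1)%N ->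
        (Theta Q X0 <->
           (forall r, (1 <= r <= n - k - 1)%N -> mu r != mu (n - k)%N -> h r = 0) /\
           (forall t, (n - k + 2 <= t <= n)%N -> mu t != mu (n - k)%N -> h t = -1) /\
           (forall m, (1 <= m <= n)%N -> mu m = mu (n - k)%N -> h m = 0 \/ h m = -1)))).
Proof.
move=> n_ge2 _ char_poly_Q sorted zeta_mu su_X0 mexp_X0 char_poly_X0 sum_h.
have mQE := mQE n_ge2 char_poly_Q sorted zeta_mu su_X0 mexp_X0.
have Theta_X0_k0 := Theta_X0_k0 n_ge2 char_poly_Q sorted zeta_mu su_X0 mexp_X0 char_poly_X0 sum_h.
have Theta_X0_gap := Theta_X0_gap n_ge2 char_poly_Q sorted zeta_mu su_X0 mexp_X0 char_poly_X0 sum_h.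
have Theta_X0_tie := Theta_X0_tie n_ge2 char_poly_Q sorted zeta_mu su_X0 mexp_X0 char_poly_X0 sum_h.
split=> [k0|k_ge1].
  split; last exact: Theta_X0_k0.
  by rewrite mQE /min_sqsum k0 subn0 addn1 (big_geq (leqnn n.+1)) addr0.
by rewrite mQE; split=> //; split; [exact: Theta_X0_gap|exact: Theta_X0_tie].
Qed.
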